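(* Let $A$ be a meet-complemented lattice in which $\Box x$ and $\Diamond x$ exist for every $x\in A$. Then for every $a\in A$: (i) $\Diamond a\le\neg\Box\neg a$; (ii) $\neg\Diamond a=\Box\neg a$; (iii) $\neg\neg\Diamond a=\neg\Box\neg a$; (iv) $\Box\neg\neg a=\neg\Diamond\neg a$; (v) $\Diamond\neg a\le\neg\Box a$; (vi) $\Box a\le\neg\Diamond\neg a$; (vii) $\neg\Diamond\neg a\le\Box\Diamond a$; (viii) $\Box\neg a\le\neg\Box\Diamond a$; (ix) $\Box\Diamond a\le\neg\Box\neg a$; (x) $\Diamond\neg\Box\neg a=\Diamond\Diamond a$.
   Context: A meet-complemented lattice is a lattice $(L,\le)$ (not necessarily distributive) such that for every $a\in L$ the element $\neg a=\max\{b\in L: a\wedge b\le c\ \text{for all } c\in L\}$ exists; it is bounded with bottom $0$ and top $1$. For $a\in L$, $\Box a=\max\{b\in L: a\vee\neg b=1\}$ and $\Diamond a=\min\{b\in L: \neg a\vee b=1\}$. *)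

From mathcomp Require Import all_boot all_order.
Set Implicit Arguments. Unset Strict Implicit. Unset Printing Implicit Defensive.
Import Order.TTheory.
Local Open Scope order_scope.

Definition is_max {d : Order.disp_t} {L : porderType d} (P : L -> Prop) (m : L) :=
  P m /\ forall b, P b -> b <= m.
Definition is_min {d : Order.disp_t} {L : porderType d} (P : L -> Prop) (m : L) :=
  P m /\ forall b, P b -> m <= b.

Definition is_meet_compl {d : Order.disp_t} {L : tbLatticeType d} (neg : L -> L) :=
  forall a : L, is_max (fun b => forall c : L, a `&` b <= c) (neg a).

Definition is_box {d : Order.disp_t} {L : tbLatticeType d} (neg box : L -> L) :=
  forall a : L, is_max (fun b => a `|` neg b = \top) (box a).

Definition is_dia {d : Order.disp_t} {L : tbLatticeType d} (neg dia : L -> L) :=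
  forall a : L, is_min (fun b => neg a `|` b = \top) (dia a).

From mathcomp Require Import all_boot all_order.
Import Order.TTheory.
Local Open Scope order_scope.

(* The meet-complement satisfies [y <= neg x <-> x `&` y = \bot], so it is
   antitone, [x <= neg (neg x)] and [neg (neg (neg x)) = neg x].
   Moreover [x `|` y = \top] forces [neg x `&` neg y = \bot], because
   [neg (neg x `&` neg y)] lies above both [x] and [y].  Together with the
   extremal properties of [box] and [dia] these give every item; note that
   [dia x] depends only on [neg x], so [dia (neg (neg x)) = dia x]. *)

Section MeetComplemented.

Context {d : Order.disp_t} {A : tbLatticeType d} {neg box dia : A -> A}.
Hypothesis neg_spec : is_meet_compl neg.
Hypothesis box_spec : is_box neg box.
Hypothesis dia_spec : is_dia neg dia.

Lemma meet_neg (x : A) : x `&` neg x = \bot.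
Proof.
by apply/eqP; rewrite eq_le le0x andbT; case: (neg_spec x) => /(_ \bot).
Qed.

Lemma le_negE (x y : A) : (y <= neg x) = (x `&` y == \bot).
Proof.
apply/idP/idP => [y_le | /eqP xy0].
- by rewrite eq_le le0x andbT -(meet_neg x) leI2.
- by case: (neg_spec x) => _; apply=> c; rewrite xy0 le0x.
Qed.

Lemma neg_anti {x y : A} : x <= y -> neg y <= neg x.
Proof. by move=> xy; rewrite le_negE eq_le le0x -(meet_neg y) leI2. Qed.

Lemma le_negneg (x : A) : x <= neg (neg x).
Proof. by rewrite le_negE meetC -le_negE. Qed.

Lemma negnegneg (x : A) : neg (neg (neg x)) = neg x.
Proof. by apply/eqP; rewrite eq_le le_negneg andbT neg_anti ?le_negneg. Qed.

Lemma join_top_monor {x y y' : A} : x `|` y = \top -> y <= y' -> x `|` y' = \top.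
Proof. by move=> xy yy'; apply/eqP; rewrite eq_le lex1 -xy leU2. Qed.

Lemma meet_neg_join_top {x y : A} : x `|` y = \top -> neg x `&` neg y = \bot.
Proof.
move=> xy; set z := neg x `&` neg y.
have nz1 : neg z = \top.
  apply/eqP; rewrite eq_le lex1 -xy leUx.
  rewrite (le_trans (le_negneg x)) ?(le_trans (le_negneg y)) //;
    by apply: neg_anti; rewrite /z (leIl, leIr).
by apply/eqP; rewrite -[z]meetxx -le_negE nz1 lex1.
Qed.

Lemma neg_le_negneg_join_top {x y : A} : x `|` y = \top -> neg x <= neg (neg y).
Proof. by move=> /meet_neg_join_top nxy; rewrite le_negE meetC nxy. Qed.

Lemma box_ge (x b : A) : x `|` neg b = \top -> b <= box x.
Proof. by case: (box_spec x) => _; apply. Qed.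

Lemma join_neg_box (x : A) : x `|` neg (box x) = \top.
Proof. by case: (box_spec x). Qed.

Lemma dia_le (x b : A) : neg x `|` b = \top -> dia x <= b.
Proof. by case: (dia_spec x) => _; apply. Qed.

Lemma neg_join_dia (x : A) : neg x `|` dia x = \top.
Proof. by case: (dia_spec x). Qed.

Lemma neg_le_neg_box (x : A) : neg x <= neg (box x).
Proof. by rewrite -[neg (box x)]negnegneg neg_le_negneg_join_top ?join_neg_box. Qed.

Lemma dia_negneg (x : A) : dia (neg (neg x)) = dia x.
Proof.
apply/le_anti/andP; split; apply: dia_le; first by rewrite negnegneg neg_join_dia.
by have := neg_join_dia (neg (neg x)); rewrite negnegneg.
Qed.

Lemma dia_le_neg_box_neg (a : A) : dia a <= neg (box (neg a)).
Proof. exact/dia_le/join_neg_box. Qed.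

Lemma neg_dia (a : A) : neg (dia a) = box (neg a).
Proof.
apply/le_anti/andP; split.
- by apply: box_ge; apply: join_top_monor (neg_join_dia a) (le_negneg _).
- apply: (le_trans (le_negneg _)); exact: neg_anti (dia_le_neg_box_neg a).
Qed.

Lemma dia_neg_le_neg_box (a : A) : dia (neg a) <= neg (box a).
Proof.
apply: dia_le; rewrite joinC (join_top_monor _ (le_negneg a)) //.
by rewrite joinC join_neg_box.
Qed.

Lemma box_le_neg_dia_neg (a : A) : box a <= neg (dia (neg a)).
Proof. by apply: (le_trans (le_negneg _)); apply/neg_anti/dia_neg_le_neg_box. Qed.

Lemma neg_dia_neg_le_box_dia (a : A) : neg (dia (neg a)) <= box (dia a).
Proof.
apply/box_ge/(@join_top_monor _ (neg a)); first by rewrite joinC neg_join_dia.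
by have := neg_le_negneg_join_top (neg_join_dia (neg a)); rewrite negnegneg.
Qed.

Lemma box_neg_le_neg_box_dia (a : A) : box (neg a) <= neg (box (dia a)).
Proof. by rewrite -neg_dia neg_le_neg_box. Qed.

Lemma box_dia_le_neg_box_neg (a : A) : box (dia a) <= neg (box (neg a)).
Proof.
by rewrite -neg_dia (le_trans (le_negneg _)) // neg_anti // neg_le_neg_box.
Qed.

Lemma dia_neg_box_neg (a : A) : dia (neg (box (neg a))) = dia (dia a).
Proof. by rewrite -neg_dia dia_negneg. Qed.

End MeetComplemented.

Theorem proposition9 (d : Order.disp_t) (A : tbLatticeType d)
  (neg box dia : A -> A)
  (Hneg : is_meet_compl neg) (Hbox : is_box neg box) (Hdia : is_dia neg dia) :
  forall a : A,
    dia a <= neg (box (neg a))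
     /\ neg (dia a) = box (neg a)
     /\ neg (neg (dia a)) = neg (box (neg a))
     /\ box (neg (neg a)) = neg (dia (neg a))
     /\ dia (neg a) <= neg (box a)
     /\ box a <= neg (dia (neg a))
     /\ neg (dia (neg a)) <= box (dia a)
     /\ box (neg a) <= neg (box (dia a))
     /\ box (dia a) <= neg (box (neg a))
     /\ dia (neg (box (neg a))) = dia (dia a).
Proof.
move=> a; have negdiaE := neg_dia Hneg Hbox Hdia.
split; first exact: dia_le_neg_box_neg Hbox Hdia a.
split; first exact: negdiaE.
split; first by rewrite negdiaE.
split; first by rewrite negdiaE.
split; first exact: dia_neg_le_neg_box Hneg Hbox Hdia a.
split; first exact: box_le_neg_dia_neg Hneg Hbox Hdia a.
split; first exact: neg_dia_neg_le_box_dia Hneg Hbox Hdia a.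
split; first exact: box_neg_le_neg_box_dia Hneg Hbox Hdia a.
split; first exact: box_dia_le_neg_box_neg Hneg Hbox Hdia a.
exact: dia_neg_box_neg Hneg Hbox Hdia a.
Qed.
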